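(* Let $n\ge 2$, $N=n^2+1$, $m=(n-1)^2+1$, let $F,D\in\mathcal{S}^n$, $C\in\mathbb{R}^{n\times n}$, let $$L_Q=\begin{pmatrix}0&-\tfrac12\mathrm{vec}(C)^T\\ -\tfrac12\mathrm{vec}(C)& D\otimes F\end{pmatrix}\in\mathcal{S}^{N},$$ let $\hat V\in\mathbb{R}^{N\times m}$ be the matrix described in the context, let $J$ be a given set of index pairs of $N\times N$ matrices, and fix $\mu>0$. Suppose $(R^*,Z^* )$, with $R^*\in\mathcal{S}^m$, $Z^*\in\mathcal{S}^N$, is the unique solution of the system $$(-\hat V^TZ\hat V)R=\mu I,\quad \mathcal{G}_J(\hat VR\hat V^T)=E_{00},\quad -(L_Q+Z)\in\mathcal{S}^{N}_J,\quad R\succeq O,\quad -\hat V^TZ\hat V\succeq O.$$ Let $Y^*=\hat VR^*\hat V^T$. Then $$\max_{Z\in\mathcal{S}^N}L_0^{\rm BQAP}(R^*,Y^*,Z)=L_0^{\rm BQAP}(R^*,Y^*,Z^* )=\min_{R\succ O,\;Y\in\mathcal{S}^N}L_0^{\rm BQAP}(R,Y,Z^* ),$$ i.e. $(R^*,Y^*,Z^* )$ is a saddle point of $L_0^{\rm BQAP}$.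
   Context: $\mathcal{S}^k$ is the space of real symmetric $k\times k$ matrices, $\langle A,B\rangle=\mathrm{Tr}(A^TB)$, $\succeq$ / $\succ$ denote positive semidefinite / definite, $\mathrm{vec}(C)$ stacks the columns of $C$, and $\otimes$ is the Kronecker product. $\hat V$ is the column-normalized version of $\bar V=\begin{pmatrix}1&0^T\\ \frac1n(e\otimes e)&V\otimes V\end{pmatrix}$, $V=\begin{pmatrix}I_{n-1}\\ -e^T\end{pmatrix}$, $e$ the all-ones vector, so that $\hat V^T\hat V=I$. The gangster operator $\mathcal{G}_J:\mathcal{S}^N\to\mathcal{S}^N$ is $(\mathcal{G}_J(Y))_{ij}=Y_{ij}$ if $(i,j)\in J$ or $(j,i)\in J$, and $0$ otherwise; $\mathcal{S}^N_J=\{X\in\mathcal{S}^N:\mathcal{G}_J(X)=X\}$. $E_{00}\in\mathcal{S}^N$ is the matrix whose $(1,1)$ entry is $1$ and all others $0$. $\mathcal{I}(Y)=0$ if $\mathcal{G}_J(Y)=E_{00}$ and $+\infty$ otherwise. The unaugmented Lagrangian is, for $R\succ O$, $Y,Z\in\mathcal{S}^N$, $$L_0^{\rm BQAP}(R,Y,Z)=\langle L_Q,Y\rangle-\mu\log(\det R)+\mathcal{I}(Y)+\langle Z,\,Y-\hat VR\hat V^T\rangle.$$ *)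

From HB Require Import structures.
From mathcomp Require Import all_boot all_order all_algebra.
From mathcomp Require Import all_classical all_reals all_analysis.
From mathcomp Require Import mxtens.
Set Implicit Arguments. Unset Strict Implicit. Unset Printing Implicit Defensive.
Import Order.TTheory GRing.Theory Num.Theory.
Local Open Scope ring_scope.

Section BQAP.
Variable R : realType.

Definition symmx k (A : 'M[R]_k) : Prop := A^T = A.
Definition psdmx k (A : 'M[R]_k) : Prop :=
  symmx A /\ forall x : 'cV[R]_k, 0 <= (x^T *m A *m x) 0 0.
Definition pdmx k (A : 'M[R]_k) : Prop :=
  symmx A /\ forall x : 'cV[R]_k, x != 0 -> 0 < (x^T *m A *m x) 0 0.

Definition mxinner k l (A B : 'M[R]_(k, l)) : R := \tr (A^T *m B).

(* vec(C): stacks the columns of C; entry C i j sits at position j*n+i *)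
Definition vecmx n (C : 'M[R]_n) : 'cV[R]_(n * n) :=
  \col_k C (mxtens_unindex k).2 (mxtens_unindex k).1.

Definition LQ n (F D C : 'M[R]_n) : 'M[R]_(1 + n * n) :=
  block_mx (0 : 'M[R]_1) (- 2^-1 *: (vecmx C)^T) (- 2^-1 *: vecmx C) (tensmx D F).

(* V = [I_{n-1}; -e^T] : n x (n-1) *)
Definition Vmx n : 'M[R]_(n, n.-1) :=
  \matrix_(i < n, j < n.-1)
    (if (i : nat) == j then 1 else if (i : nat) == n.-1 then -1 else 0).

Definition Vbar n : 'M[R]_(1 + n * n, 1 + n.-1 * n.-1) :=
  block_mx (1 : 'M[R]_1) 0 ((n%:R)^-1 *: (tensmx (const_mx 1 : 'cV[R]_n) (const_mx 1 : 'cV[R]_n)))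
           (tensmx (Vmx n) (Vmx n)).

Definition gangster k (J : {set 'I_k * 'I_k}) (Y : 'M[R]_k) : 'M[R]_k :=
  \matrix_(i, j) (if ((i, j) \in J) || ((j, i) \in J) then Y i j else 0).

Definition in_SJ k (J : {set 'I_k * 'I_k}) (X : 'M[R]_k) : Prop :=
  symmx X /\ gangster J X = X.

Definition E00 k : 'M[R]_k.+1 := delta_mx 0 0.

(* unaugmented Lagrangian L_0^{BQAP}(R,Y,Z), valued in the extended reals;
   the indicator I(Y) is 0 if G_J(Y) = E00 and +oo otherwise. *)
Definition L0 k m (LQm : 'M[R]_k.+1) (Vh : 'M[R]_(k.+1, m)) (mu : R)
  (J : {set 'I_k.+1 * 'I_k.+1}) (Rm : 'M[R]_m) (Y Z : 'M[R]_k.+1) : \bar R :=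
  if gangster J Y == E00 k then
    (mxinner LQm Y - mu * ln (\det Rm) + mxinner Z (Y - Vh *m Rm *m Vh^T))%:E
  else +oo%E.

Definition bqap_system n (Vh : 'M[R]_(1 + n * n, 1 + n.-1 * n.-1))
  (LQm : 'M[R]_(1 + n * n)) (mu : R) (J : {set 'I_(1 + n * n) * 'I_(1 + n * n)})
  (Rm : 'M[R]_(1 + n.-1 * n.-1)) (Z : 'M[R]_(1 + n * n)) : Prop :=
  [/\ symmx Rm /\ symmx Z,
      (- (Vh^T *m Z *m Vh)) *m Rm = mu%:M,
      gangster J (Vh *m Rm *m Vh^T) = E00 (n * n),
      in_SJ J (- (LQm + Z))
    & psdmx Rm /\ psdmx (- (Vh^T *m Z *m Vh))].

End BQAP.

From HB Require Import structures.
From mathcomp Require Import all_boot all_order all_algebra.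
From mathcomp Require Import all_classical all_reals all_analysis.
From mathcomp Require Import mxtens.
From mathcomp Require Import ring lra.
Import Order.TTheory GRing.Theory Num.Theory.
Set Implicit Arguments. Unset Strict Implicit. Unset Printing Implicit Defensive.
Local Open Scope classical_set_scope.
Local Open Scope ring_scope.

(* Since G_J(Ys) = E_00 and Ys = V Rs V^T, the Lagrangian at (Rs, Ys) does not
   depend on Z, which gives the maximum.  For the minimum, whenever G_J(Y) = E_00
   the condition -(L_Q + Zs) \in S^N_J turns <L_Q + Zs, Y> into the constant
   <L_Q + Zs, E_00>, so L_0(R, Y, Zs) = const + <W, R> - mu log det R with
   W = -V^T Zs V.  Now W is positive semidefinite and W Rs = mu I, so W is
   positive definite and the barrier <W, R> - mu log det R is minimised at
   R = mu W^-1 = Rs: writing W / mu = L^T L this is log det P <= tr P - m for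
   P = L R L^T, which follows from log a <= a - 1 by induction on Schur
   complements. *)

Section MatrixAlgebra.
Variable F : fieldType.

Definition schur_elim k (a : F) (c : 'cV[F]_k) : 'M[F]_(1 + k) :=
  block_mx 1%:M (a^-1 *: c^T) 0 1%:M.

Lemma det_schur_elim k (a : F) (c : 'cV[F]_k) : \det (schur_elim a c) = 1.
Proof. by rewrite det_ublock !det1 mulr1. Qed.

Lemma block_mx_schur k (a : F) (c : 'cV[F]_k) (D : 'M[F]_k) : a != 0 ->
  block_mx a%:M c^T c D = (schur_elim a c)^T
    *m block_mx a%:M 0 0 (D - a^-1 *: (c *m c^T)) *m schur_elim a c.
Proof.
move=> a0; rewrite tr_block_mx !trmx1 trmx0 linearZ /= trmxK !mulmx_block.
rewrite !(mul0mx, mulmx0, mul1mx, mulmx1, addr0, add0r).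
rewrite !mul_scalar_mx !mul_mx_scalar -!scalemxAr !scalerA mulfV // !scale1r.
by rewrite addrC subrK.
Qed.

Lemma det_block_diag_congr k (P : 'M[F]_(1 + k)) a (Q : 'M[F]_k) E :
  \det E = 1 -> P = E^T *m block_mx a%:M 0 0 Q *m E -> \det P = a * \det Q.
Proof.
by move=> detE ->; rewrite !det_mulmx det_tr detE det_ublock det_scalar1 mul1r mulr1.
Qed.

Lemma form_col_block m n (u : 'cV[F]_m) (v : 'cV[F]_n) A B C D :
  (col_mx u v)^T *m block_mx A B C D *m col_mx u v
  = u^T *m A *m u + u^T *m B *m v + v^T *m C *m u + v^T *m D *m v.
Proof.
rewrite tr_col_mx mul_row_block mul_row_col !mulmxDl !addrA; congr (_ + _).
by rewrite addrAC.
Qed.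

Lemma mulmx_scalar_unit k (A B : 'M[F]_k) c :
  c != 0 -> A *m B = c%:M -> A \in unitmx /\ B \in unitmx.
Proof.
move=> c0 AB; have uc : c^-1 \is a GRing.unit by rewrite unitfE invr_eq0.
rewrite -(unitmxZ A uc); apply: mulmx1_unit.
by rewrite -scalemxAl AB scale_scalar_mx mulVf.
Qed.

End MatrixAlgebra.

Section PositiveDefinite.
Variable R : realType.

Lemma quadratic_ge0_lin_eq0 (s q : R) :
  0 <= q -> (forall t, 0 <= 2 * t * s + t ^+ 2 * q) -> s = 0.
Proof.
(* at t = -s / (q + 1) the form equals -t^2 (q + 2) *)
move=> q0 H; have [t st] : exists t, s = - t * (q + 1).
  by exists (- s / (q + 1)); field; lra.
subst s; have := H t => h.
have t0 : t = 0 by nra.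
by rewrite t0 oppr0 mul0r.
Qed.

Lemma mxtrace_trmx_mul_ge0 k l (M : 'M[R]_(k, l)) : 0 <= \tr (M^T *m M).
Proof.
apply: sumr_ge0 => i _; rewrite mxE; apply: sumr_ge0 => j _.
by rewrite mxE -expr2 sqr_ge0.
Qed.

Lemma trmx_mul_self_eq0 k (y : 'cV[R]_k) : (y^T *m y) 0 0 = 0 -> y = 0.
Proof.
have term_ge0 i : 0 <= y^T 0 i * y i 0 by rewrite mxE -expr2 sqr_ge0.
rewrite mxE => /(psumr_eq0P (fun i _ => term_ge0 i)) y0.
apply/matrixP => i j; rewrite (ord1 j) mxE.
by have /eqP := y0 i isT; rewrite mxE mulf_eq0 orbb => /eqP.
Qed.

Lemma symmx_bilinC k (A : 'M[R]_k) (x y : 'cV[R]_k) : symmx A ->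
  (x^T *m A *m y) 0 0 = (y^T *m A *m x) 0 0.
Proof.
move=> sA; rewrite -[in LHS](trmxK (x^T *m A *m y)) mxE.
by rewrite !trmx_mul trmxK sA mulmxA.
Qed.

Lemma symmx_form_DZ k (A : 'M[R]_k) (x y : 'cV[R]_k) (t : R) : symmx A ->
  ((x + t *: y)^T *m A *m (x + t *: y)) 0 0
  = (x^T *m A *m x) 0 0 + 2 * t * (x^T *m A *m y) 0 0 + t ^+ 2 * (y^T *m A *m y) 0 0.
Proof.
move=> sA; move: (symmx_bilinC y x sA).
have -> : (x + t *: y)^T = x^T + t *: y^T by apply/matrixP => i j; rewrite !mxE.
rewrite !mulmxDl !mulmxDr -!scalemxAl -!scalemxAr.
move: (x^T *m A *m x) (x^T *m A *m y) (y^T *m A *m x) (y^T *m A *m y) => a b c d cb.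
by rewrite !mxE cb; ring.
Qed.

Lemma psdmx_ker k (A : 'M[R]_k) (x : 'cV[R]_k) :
  psdmx A -> (x^T *m A *m x) 0 0 = 0 -> A *m x = 0.
Proof.
move=> [sA pA] x0; set y := A *m x.
apply: trmx_mul_self_eq0; apply: (quadratic_ge0_lin_eq0 (q := (y^T *m A *m y) 0 0)).
  exact: pA.
move=> t; have := pA (x + t *: y); rewrite symmx_form_DZ // x0 add0r.
by rewrite (symmx_bilinC x y sA) -mulmxA.
Qed.

Lemma psdmx_unit_pdmx k (A : 'M[R]_k) : psdmx A -> A \in unitmx -> pdmx A.
Proof.
move=> psdA uA; split; first by case: psdA.
move=> x x0; rewrite lt_def; apply/andP; split; last by case: psdA => _ ->.
apply: contra x0 => /eqP/(psdmx_ker psdA) Ax0.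
by rewrite -(mulKmx uA x) Ax0 mulmx0.
Qed.

Lemma symmx_congr k l (E : 'M[R]_(k, l)) (P : 'M[R]_k) :
  symmx P -> symmx (E^T *m P *m E).
Proof. by move=> sP; rewrite /symmx !trmx_mul trmxK sP mulmxA. Qed.

Lemma pdmx_congr k (E P : 'M[R]_k) :
  E \in unitmx -> pdmx P -> pdmx (E^T *m P *m E).
Proof.
move=> uE [sP pP]; split; first exact: symmx_congr.
move=> x x0; have -> : x^T *m (E^T *m P *m E) *m x = (E *m x)^T *m P *m (E *m x).
  by rewrite trmx_mul !mulmxA.
apply: pP; apply: contra x0 => /eqP Ex0.
by rewrite -(mulKmx uE x) Ex0 mulmx0.
Qed.

Lemma pdmx_diag_gt0 k (P : 'M[R]_k) i : pdmx P -> 0 < P i i.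
Proof.
move=> [_ pP]; have e0 : delta_mx i 0 != 0 :> 'cV[R]_k.
  by apply/eqP => /matrixP/(_ i 0); rewrite !mxE !eqxx => /eqP; rewrite oner_eq0.
by have := pP _ e0; rewrite trmx_delta -rowE -colE !mxE.
Qed.

Lemma pdmx_block_diag m n (A : 'M[R]_m) (Q : 'M[R]_n) :
  pdmx (block_mx A 0 0 Q) -> pdmx Q.
Proof.
move=> [sP pP]; split; first by rewrite /symmx -[Q](block_mxKdr A 0 0) trmx_drsub sP.
move=> x x0; have ex : col_mx (0 : 'cV[R]_m) x != 0.
  by apply: contra x0 => /eqP/(congr1 dsubmx); rewrite col_mxKd linear0 => ->.
by have := pP _ ex; rewrite form_col_block !(mulmx0, mul0mx, add0r).
Qed.

Lemma pdmx_schur k (P : 'M[R]_(1 + k)) : pdmx P ->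
  exists a (Q : 'M[R]_k) (E : 'M[R]_(1 + k)),
  [/\ 0 < a, pdmx Q, \det E = 1, P = E^T *m block_mx a%:M 0 0 Q *m E
     & \tr Q <= \tr P - a].
Proof.
move=> pdP; have [sP pP] := pdP.
set a : R := ulsubmx P 0 0; set c := dlsubmx P; set D := drsubmx P.
have Pblock : P = block_mx a%:M c^T c D.
  by rewrite -[P]submxK [ulsubmx P]mx11_scalar /c trmx_dlsub sP.
have a_gt0 : 0 < a by rewrite /a !mxE; exact: pdmx_diag_gt0.
set Q := D - a^-1 *: (c *m c^T); set E := schur_elim a c.
have Pdec : P = E^T *m block_mx a%:M 0 0 Q *m E.
  by rewrite {1}Pblock block_mx_schur ?gt_eqF.
have detE : \det E = 1 by exact: det_schur_elim.
have uE : E \in unitmx by rewrite unitmxE detE unitr1.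
have diagE : block_mx a%:M 0 0 Q = (invmx E)^T *m P *m invmx E.
  by rewrite Pdec trmx_inv !mulmxA mulVmx ?unitmx_tr // mul1mx mulmxK.
have pdQ : pdmx Q.
  apply: (@pdmx_block_diag 1 k a%:M); rewrite diagE.
  by apply: pdmx_congr; rewrite ?unitmx_inv.
exists a, Q, E; split => //.
rewrite Pblock mxtrace_block mxtrace_scalar /Q raddfB /= mxtraceZ mxtrace_mulC.
have := mxtrace_trmx_mul_ge0 c; have : 0 <= a^-1 by rewrite invr_ge0 ltW.
move: (\tr (c^T *m c)) => t; nra.
Qed.

Lemma pdmx_det_gt0 k (P : 'M[R]_k) : pdmx P -> 0 < \det P.
Proof.
elim: k P => [|k IH] P pdP; first by rewrite det_mx00 ltr01.
have [a [Q [E [a_gt0 pdQ detE Pdec _]]]] := pdmx_schur pdP.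
by rewrite (det_block_diag_congr detE Pdec) mulr_gt0 ?IH.
Qed.

Lemma ln_le_subr1 (x : R) : 0 < x -> ln x <= x - 1.
Proof.
by move=> x_gt0; have := @le_ln1Dx R (x - 1); rewrite [1 + _]addrC subrK; apply; lra.
Qed.

Lemma ln_det_le_mxtrace k (P : 'M[R]_k) : pdmx P -> ln (\det P) <= \tr P - k%:R.
Proof.
elim: k P => [|k IH] P pdP; first by rewrite det_mx00 ln1 /mxtrace big_ord0 subr0.
have [a [Q [E [a_gt0 pdQ detE Pdec trQ]]]] := pdmx_schur pdP.
rewrite (det_block_diag_congr detE Pdec) lnM ?posrE ?pdmx_det_gt0 //.
have := IH Q pdQ; have := ln_le_subr1 a_gt0; rewrite -natr1; lra.
Qed.

Lemma pdmx_factor k (P : 'M[R]_k) : pdmx P -> exists L : 'M[R]_k, P = L^T *m L.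
Proof.
elim: k P => [|k IH] P pdP; first by exists 0; apply/matrixP => -[].
suff : exists L : 'M[R]_(1 + k), P = L^T *m L by [].
have [a [Q [E [a_gt0 pdQ detE -> _]]]] := pdmx_schur pdP.
have [L ->] := IH Q pdQ.
exists (block_mx (Num.sqrt a)%:M 0 0 L *m E).
rewrite trmx_mul !mulmxA; congr (_ *m _); rewrite -mulmxA; congr (_ *m _).
rewrite tr_block_mx tr_scalar_mx !trmx0 mulmx_block !(mulmx0, mul0mx, addr0, add0r).
by rewrite -scalar_mxM -expr2 sqr_sqrtr ?ltW.
Qed.

Lemma pdmxZ k (P : 'M[R]_k) c : 0 < c -> pdmx P -> pdmx (c *: P).
Proof.
move=> c_gt0 [sP pP]; split; first by rewrite /symmx linearZ /= sP.
by move=> x x0; rewrite -scalemxAr -scalemxAl mxE mulr_gt0 ?pP.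
Qed.

Lemma ln_det_mul_le k (A B : 'M[R]_k) : pdmx A -> pdmx B ->
  ln (\det A) + ln (\det B) <= \tr (A *m B) - k%:R.
Proof.
move=> pdA pdB; have [L AE] := pdmx_factor pdA.
have uLT : L^T \in unitmx.
  rewrite unitmx_tr unitmxE unitfE; apply: contraTneq (pdmx_det_gt0 pdA) => detL0.
  by rewrite AE det_mulmx det_tr detL0 mulr0 ltxx.
have := ln_det_le_mxtrace (pdmx_congr uLT pdB); rewrite trmxK.
have -> : \tr (L *m B *m L^T) = \tr (A *m B) by rewrite mxtrace_mulC mulmxA -AE.
have -> : \det (L *m B *m L^T) = \det A * \det B.
  by rewrite AE !det_mulmx det_tr; ring.
by rewrite lnM ?posrE ?pdmx_det_gt0.
Qed.

Lemma tr_sub_ln_det_min k (W S P : 'M[R]_k) mu : 0 < mu -> psdmx W ->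
  W *m S = mu%:M -> pdmx P ->
  \tr (W *m S) - mu * ln (\det S) <= \tr (W *m P) - mu * ln (\det P).
Proof.
move=> mu_gt0 psdW WS pdP.
have [uW _] := mulmx_scalar_unit (lt0r_neq0 mu_gt0) WS.
have pdW1 : pdmx (mu^-1 *: W).
  by apply: pdmxZ; [rewrite invr_gt0 | exact: psdmx_unit_pdmx].
have detW1S : \det (mu^-1 *: W) * \det S = 1.
  by rewrite -det_mulmx -scalemxAl WS scale_scalar_mx mulVf ?lt0r_neq0 ?det1.
have detS_gt0 : 0 < \det S by rewrite -(pmulr_rgt0 _ (pdmx_det_gt0 pdW1)) detW1S ltr01.
have lnW1 : ln (\det (mu^-1 *: W)) = - ln (\det S).
  by apply/eqP; rewrite -addr_eq0 -lnM ?posrE ?detS_gt0 ?pdmx_det_gt0 // detW1S ln1.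
have := ler_wpM2l (ltW mu_gt0) (ln_det_mul_le pdW1 pdP).
rewrite lnW1 -scalemxAl mxtraceZ mulrBr mulrA mulfV ?lt0r_neq0 // mul1r.
rewrite WS mxtrace_scalar -[mu *+ k]mulr_natr; lra.
Qed.

End PositiveDefinite.

Section Lagrangian.
Variable R : realType.

Lemma mxinnerDl k l (A B C : 'M[R]_(k, l)) :
  mxinner (A + B) C = mxinner A C + mxinner B C.
Proof. by rewrite /mxinner raddfD /= mulmxDl mxtraceD. Qed.

Lemma mxinnerBr k l (A B C : 'M[R]_(k, l)) :
  mxinner A (B - C) = mxinner A B - mxinner A C.
Proof. by rewrite /mxinner mulmxBr raddfB. Qed.

Lemma mxinner_gangster k J (A B : 'M[R]_k) :
  mxinner (gangster J A) B = mxinner A (gangster J B).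
Proof.
apply: eq_bigr => i _; rewrite !mxE; apply: eq_bigr => j _; rewrite !mxE.
by case: ifP => _; rewrite ?mul0r ?mulr0.
Qed.

Lemma gangsterN k J (A : 'M[R]_k) : gangster J (- A) = - gangster J A.
Proof. by apply/matrixP => i j; rewrite !mxE; case: ifP; rewrite ?oppr0. Qed.

Lemma L0_feasible k m (LQm Z : 'M[R]_k.+1) (Vh : 'M[R]_(k.+1, m)) (mu : R) J
    (P : 'M[R]_m) (Y : 'M[R]_k.+1) :
  symmx Z -> in_SJ J (- (LQm + Z)) -> gangster J Y = E00 R k ->
  L0 LQm Vh mu J P Y Z = (mxinner (LQm + Z) (E00 R k)
    + \tr (- (Vh^T *m Z *m Vh) *m P) - mu * ln (\det P))%:E.
Proof.
move=> sZ [_ XJ] YJ; rewrite /L0 YJ eqxx; congr (_%:E).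
rewrite gangsterN in XJ; move/oppr_inj: XJ => XJ.
have XY : mxinner (LQm + Z) Y = mxinner (LQm + Z) (E00 R k).
  by rewrite -{1}XJ mxinner_gangster YJ.
have ZV : mxinner Z (Vh *m P *m Vh^T) = - \tr (- (Vh^T *m Z *m Vh) *m P).
  by rewrite mulNmx raddfN /= opprK /mxinner sZ !mulmxA mxtrace_mulC !mulmxA.
rewrite mxinnerBr ZV -XY mxinnerDl; lra.
Qed.

End Lagrangian.

Unset Implicit Arguments.
Theorem proposition2 (R : realType) (n : nat) (Hn : (2 <= n)%N)
  (F D C : 'M[R]_n) (HF : symmx F) (HD : symmx D)
  (Vh : 'M[R]_(1 + n * n, 1 + n.-1 * n.-1))
  (HVh_orth : Vh^T *m Vh = 1%:M)
  (HVh_range : exists T : 'M[R]_(1 + n.-1 * n.-1), T \in unitmx /\ Vh = Vbar R n *m T)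
  (J : {set 'I_(1 + n * n) * 'I_(1 + n * n)}) (mu : R) (Hmu : 0 < mu)
  (Rs : 'M[R]_(1 + n.-1 * n.-1)) (Zs : 'M[R]_(1 + n * n))
  (Hsol : bqap_system Vh (LQ F D C) mu J Rs Zs)
  (Huniq : forall (Rm : 'M[R]_(1 + n.-1 * n.-1)) (Z : 'M[R]_(1 + n * n)),
      bqap_system Vh (LQ F D C) mu J Rm Z -> Rm = Rs /\ Z = Zs) :
  let Ys := Vh *m Rs *m Vh^T in
  let L := @L0 R (n * n) _ (LQ F D C) Vh mu J in
  [/\ pdmx Rs,
      ereal_sup [set L Rs Ys Z | Z in [set Z : 'M[R]_(1 + n * n) | symmx Z]]
        = L Rs Ys Zs
    & L Rs Ys Zs
        = ereal_inf [set L p.1 p.2 Zs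
                    | p in [set p : 'M[R]_(1 + n.-1 * n.-1) * 'M[R]_(1 + n * n)
                           | pdmx p.1 /\ symmx p.2]]].
Proof.
move=> Ys L; case: Hsol => [[sR sZ] WR YsJ ZJ [psdR psdW]].
have [_ uR] := mulmx_scalar_unit (lt0r_neq0 Hmu) WR.
have L_indep_Z Z : L Rs Ys Z = L Rs Ys Zs.
  by rewrite /L /L0 YsJ eqxx /Ys subrr /mxinner !mulmx0 !linear0.
have pdR := psdmx_unit_pdmx psdR uR.
split => //.
- apply: le_anti; apply/andP; split; last by apply: ereal_sup_ubound; exists Zs.
  by apply/ereal_supP => _ [Z _ <-]; rewrite L_indep_Z.
- apply: le_anti; apply/andP; split; last first.
    apply: ereal_inf_lbound; exists (Rs, Ys) => //; split => //.
    by rewrite /Ys -[in Vh *m _](trmxK Vh); exact: symmx_congr.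
  apply/ereal_infP => _ [[P Y] [pdP _] <-] /=.
  have [/eqP YJ|YJ] := boolP (gangster J Y == E00 R (n * n)); last first.
    by rewrite /L /L0 (negbTE YJ) leey.
  rewrite /L !L0_feasible // lee_fin.
  have := tr_sub_ln_det_min Hmu psdW WR pdP; lra.
Qed.
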